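(* There exists a universal $\varepsilon_1>0$ such that for every $0<\varepsilon\le\varepsilon_1$ the following holds. Let $\mathbf{u}=(u^1,\dots,u^m)$ be a viscosity solution to $\Delta\mathbf{u}=|\mathbf{u}|^{p-2}\mathbf{u}$ in $B_1$ such that $$|\mathbf{u}-f^1u_0(x_n)|\le\varepsilon\ \text{in } B_1\qquad\text{and}\qquad |\mathbf{u}|\equiv0\ \text{in } B_1\cap\{x_n<-\varepsilon\}.$$ Then $$|\mathbf{u}|\le u_0\!\left(x_n+\varepsilon^{\frac1{2\kappa}}\right)\ \text{in } B_1\qquad\text{and}\qquad u_0\!\left(x_n-\varepsilon^{\frac1{2\kappa}}\right)\le u^1\ \text{in } B_1\cap\left\{x_n\ge\varepsilon^{\frac1{2\kappa}}\right\}.$$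
   Context: Fix integers $n\ge 2$, $m\ge 1$ and $0<p<1$; universal means depending only on $n,m,p$. Set $\kappa:=\frac{2}{2-p}$, $c_p:=[\kappa(\kappa-1)]^{\frac{1}{p-2}}$, $u_0(t):=c_p(\max\{t,0\})^\kappa$. $f^1$ is the first standard basis vector of $\mathbb{R}^m$. For $\mathbf{u}\in C(\Omega;\mathbb{R}^m)$, $\Omega(\mathbf{u}):=\Omega\cap\{|\mathbf{u}|>0\}$, $\Gamma(\mathbf{u}):=\Omega\cap\partial\Omega(\mathbf{u})$. Viscosity solution: $\mathbf{u}\in C(\Omega;\mathbb{R}^m)$ is a viscosity solution of $\Delta\mathbf{u}=|\mathbf{u}|^{p-2}\mathbf{u}$ in $\Omega$ if (i) $\Delta u^i=|\mathbf{u}|^{p-2}u^i$ in $\Omega(\mathbf{u})$ for all $i$, and (ii) for every $x_0\in\Gamma(\mathbf{u})$ and every $f\in\mathbb{R}^m$, $\langle\mathbf{u},f\rangle$ cannot be touched from below at $x_0$ by a function $\varphi\in C^1$ with $\varphi(x_0)=0$, $|\nabla\varphi(x_0)|\ne0$, such that on $\{\varphi\ne0\}$, $\varphi\in C^2$ and $\Delta\varphi>\varphi^{p-1}\chi_{\{\varphi>0\}}$. *)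

From HB Require Import structures.
From mathcomp Require Import all_boot all_order all_algebra.
From mathcomp Require Import all_classical all_reals all_analysis.
Set Implicit Arguments. Unset Strict Implicit. Unset Printing Implicit Defensive.
Import Order.TTheory GRing.Theory Num.Theory.
Import numFieldNormedType.Exports.
Local Open Scope classical_set_scope.
Local Open Scope ring_scope.

Section Defs.
Variable R : realType.

Definition dotp k (a b : 'rV[R]_k) : R := \sum_(i < k) a ord0 i * b ord0 i.
Definition enorm k (a : 'rV[R]_k) : R := Num.sqrt (dotp a a).

Definition eball n (x0 : 'rV[R]_n) (r : R) : set 'rV[R]_n :=
  [set x | enorm (x - x0) < r].
Definition B1 n : set 'rV[R]_n := eball 0 1.

(* the last coordinate x_n of x in R^n (0 if n = 0, never used) *)
Definition xn n : 'rV[R]_n -> R :=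
  match n return 'rV[R]_n -> R with
  | 0 => fun _ => 0
  | k.+1 => fun x => x ord0 ord_max
  end.

Definition coord1 m : 'rV[R]_m -> R :=
  match m return 'rV[R]_m -> R with
  | 0 => fun _ => 0
  | k.+1 => fun x => x ord0 ord0
  end.

Definition f1 m : 'rV[R]_m := \row_(i < m) (if val i == 0%N then 1 else 0).

Definition kappa (p : R) : R := 2 / (2 - p).
Definition cp (p : R) : R := powR (kappa p * (kappa p - 1)) (1 / (p - 2)).
Definition u0 (p : R) (t : R) : R := cp p * powR (Num.max t 0) (kappa p).

Definition partial n (i : 'I_n) (g : 'rV[R]_n -> R) : 'rV[R]_n -> R :=
  fun x => 'D_(delta_mx ord0 i) g x.

Definition C1_on n (U : set 'rV[R]_n) (g : 'rV[R]_n -> R) : Prop :=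
  (forall i x, U x -> derivable g x (delta_mx ord0 i)) /\
  (forall i, {within U, continuous (partial i g)}).

Definition C2_on n (U : set 'rV[R]_n) (g : 'rV[R]_n -> R) : Prop :=
  C1_on U g /\ forall i, C1_on U (partial i g).

Definition laplacian n (g : 'rV[R]_n -> R) (x : 'rV[R]_n) : R :=
  \sum_(i < n) partial i (partial i g) x.

Definition posset n m (Om : set 'rV[R]_n) (u : 'rV[R]_n -> 'rV[R]_m) :=
  Om `&` [set x | 0 < enorm (u x)].
Definition freebd n m (Om : set 'rV[R]_n) (u : 'rV[R]_n -> 'rV[R]_m) :=
  Om `&` (closure (posset Om u) `\` interior (posset Om u)).

(* phi touches g from below at x0 (within the ball B_r(x0)) and is an admissible
   strict test function in the sense of condition (ii) *)
Definition bad_test_fn n (p : R) (g : 'rV[R]_n -> R) (x0 : 'rV[R]_n)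
    (r : R) (phi : 'rV[R]_n -> R) : Prop :=
  0 < r /\
  C1_on (eball x0 r) phi /\
  phi x0 = 0 /\
  (exists i, partial i phi x0 != 0) /\
  C2_on (eball x0 r `&` [set x | phi x != 0]) phi /\
      (forall x, eball x0 r x -> phi x != 0 ->
          laplacian phi x > (if 0 < phi x then powR (phi x) (p - 1) else 0)) /\
      (forall x, eball x0 r x -> phi x <= g x).

Definition viscosity_solution n m (p : R) (Om : set 'rV[R]_n)
    (u : 'rV[R]_n -> 'rV[R]_m) : Prop :=
  [/\ (forall x, Om x -> {for x, continuous u}),
      (forall i : 'I_m,
         C2_on (posset Om u) (fun x => u x ord0 i) /\
         forall x, posset Om u x ->
           laplacian (fun y => u y ord0 i) x
             = powR (enorm (u x)) (p - 2) * u x ord0 i) &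
      (* (ii) free boundary condition *)
      (forall x0, freebd Om u x0 -> forall f : 'rV[R]_m,
         ~ exists r phi, eball x0 r `<=` Om /\
             bad_test_fn p (fun x => dotp (u x) f) x0 r phi)].

End Defs.

From mathcomp Require Import all_boot all_order all_algebra.
From mathcomp Require Import all_classical all_reals all_analysis.
From mathcomp Require Import ring lra.
Set Implicit Arguments.
Unset Strict Implicit.
Unset Printing Implicit Defensive.
Import Order.TTheory GRing.Theory Num.Theory.
Local Open Scope ring_scope.

(* With d := eps^(1/(2 kappa)) we have d^kappa = sqrt eps, so
   u0(d/2) = c_p 2^-kappa sqrt eps >= eps once eps is small; superadditivity of
   t |-> t^kappa then shows that shifting u0 by d raises it by at least eps on
   {x_n >= -eps}, which absorbs the error eps in |u - u0(x_n) f^1| <= eps. *)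

Section Profile.
Variable R : realType.
Implicit Types k s t x y eps : R.

Lemma powR_superadd k x y : 1 <= k -> 0 <= x -> 0 <= y ->
  x `^ k + y `^ k <= (x + y) `^ k.
Proof.
move=> k1 x0 y0; have k0 : 0 < k by lra.
have xy0 := addr_ge0 x0 y0.
have powB1_le z : 0 <= z <= x + y -> z `^ (k - 1) <= (x + y) `^ (k - 1).
  by move=> /andP[z0 zxy]; apply: ge0_ler_powR; rewrite ?nnegrE //; lra.
rewrite -(mulr_powRB1 x0 k0) -(mulr_powRB1 y0 k0) -(mulr_powRB1 xy0 k0) mulrDl.
by apply: lerD; apply: ler_wpM2l => //; apply: powB1_le; lra.
Qed.

Variable p : R.
Hypothesis p01 : 0 < p < 1.

Lemma kappa_gt1 : 1 < kappa p.
Proof. by move: p01 => /andP[p0 p1]; rewrite /kappa ltr_pdivlMr; lra. Qed.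

Lemma cp_gt0 : 0 < cp p.
Proof. by have := kappa_gt1; rewrite /cp => k1; apply/powR_gt0/mulr_gt0; lra. Qed.

Lemma u0_ge0 t : 0 <= u0 p t.
Proof. by rewrite /u0 mulr_ge0 ?powR_ge0 ?(ltW cp_gt0). Qed.

Lemma ge0_u0 t : 0 <= t -> u0 p t = cp p * t `^ kappa p.
Proof. by move=> t0; rewrite /u0 max_l. Qed.

Lemma le0_u0 t : t <= 0 -> u0 p t = 0.
Proof.
move=> t0; have := kappa_gt1 => k1.
by rewrite /u0 max_r // powR0 ?mulr0 //; lra.
Qed.

Lemma le_u0 : {homo u0 p : s t / s <= t}.
Proof.
move=> s t st; rewrite /u0 ler_wpM2l ?(ltW cp_gt0) //.
have := kappa_gt1 => k1.
apply: ge0_ler_powR; first lra.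
- by rewrite nnegrE le_max lexx orbT.
- by rewrite nnegrE le_max lexx orbT.
- by rewrite ge_max !le_max st lexx !orbT.
Qed.

Lemma u0_superadd {s t} : 0 <= s -> 0 <= t -> u0 p s + u0 p t <= u0 p (s + t).
Proof.
move=> s0 t0; rewrite !ge0_u0 ?addr_ge0 // -mulrDr ler_wpM2l ?(ltW cp_gt0) //.
by apply: powR_superadd; rewrite ?(ltW kappa_gt1).
Qed.

Lemma shift_pow_kappa eps : 0 <= eps ->
  (eps `^ (1 / (2 * kappa p))) `^ kappa p = Num.sqrt eps.
Proof.
have := kappa_gt1 => k1 e0; rewrite -powRrM -powR12_sqrt //; congr (_ `^ _).
by field; lra.
Qed.

Lemma sqrt_le_shift eps : 0 < eps <= 1 ->
  Num.sqrt eps <= eps `^ (1 / (2 * kappa p)).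
Proof.
move=> e01; have := kappa_gt1 => k1; rewrite -powR12_sqrt; last lra.
by apply: ger_powR => //; rewrite ler_pdivrMr; lra.
Qed.

(* [1/4] forces [sqrt eps <= 1/2], the second bound [sqrt eps <= c_p 2^-kappa]. *)
Definition eps1 : R := Num.min (1 / 4) ((cp p * (1 / 2) `^ kappa p) ^+ 2).

Lemma eps1_gt0 : 0 < eps1.
Proof.
by rewrite /eps1 lt_min divr_gt0 ?exprn_gt0 ?mulr_gt0 ?cp_gt0 ?powR_gt0.
Qed.

Section SmallEps.
Variable eps : R.
Hypothesis eps_gt0 : 0 < eps.
Hypothesis eps_le_eps1 : eps <= eps1.

Let d := eps `^ (1 / (2 * kappa p)).

Let sqrt_sqr : Num.sqrt eps * Num.sqrt eps = eps.
Proof. by rewrite -expr2 sqr_sqrtr ?ltW. Qed.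

Let sqrt_le c : 0 <= c -> eps <= c ^+ 2 -> Num.sqrt eps <= c.
Proof. by move=> c0 ec; rewrite -(ger0_norm c0) -sqrtr_sqr ler_wsqrtr. Qed.

Lemma eps_le_half_shift : eps <= d / 2.
Proof.
have e14 : eps <= 1 / 4 by move: eps_le_eps1; rewrite /eps1 le_min => /andP[].
have s12 : Num.sqrt eps <= 1 / 2 by apply: sqrt_le; lra.
have sd : Num.sqrt eps <= d by apply: sqrt_le_shift; rewrite eps_gt0 /=; lra.
rewrite -sqrt_sqr; have := sqrtr_ge0 eps; nra.
Qed.

Lemma eps_le_u0_half_shift : eps <= u0 p (d / 2).
Proof.
set C := cp p * (1 / 2) `^ kappa p.
have C0 : 0 <= C by rewrite mulr_ge0 ?powR_ge0 ?(ltW cp_gt0).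
have sC : Num.sqrt eps <= C.
  by apply: sqrt_le => //; move: eps_le_eps1; rewrite /eps1 le_min => /andP[].
have -> : u0 p (d / 2) = C * Num.sqrt eps.
  rewrite ge0_u0 ?divr_ge0 ?powR_ge0 // mulrC powRM ?powR_ge0 ?invr_ge0 //.
  by rewrite shift_pow_kappa ?ltW // /C div1r; ring.
by rewrite -{1}sqrt_sqr ler_wpM2r ?sqrtr_ge0.
Qed.

Lemma u0_add_eps_le_shift t : - eps <= t -> u0 p t + eps <= u0 p (t + d).
Proof.
move=> te; have eps_d2 := eps_le_half_shift; have eps_u0d2 := eps_le_u0_half_shift.
have d0 : 0 <= d by apply: powR_ge0.
have [t0 | t0] := leP 0 t.
  have : u0 p (d / 2) <= u0 p d by apply: le_u0; lra.
  have := u0_superadd t0 d0; lra.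
rewrite le0_u0 ?add0r; last lra.
by apply: (le_trans eps_u0d2); apply: le_u0; lra.
Qed.

End SmallEps.
End Profile.

Section NearFirstAxis.
Variables (R : realType) (m : nat).
Implicit Types (v w : 'rV[R]_m.+1) (a e : R).

Let tail w := \sum_(i < m) w ord0 (lift ord0 i) ^+ 2.

Let tail_ge0 w : 0 <= tail w.
Proof. by apply: sumr_ge0 => i _; apply: sqr_ge0. Qed.

Let dotp_self w : dotp w w = coord1 w ^+ 2 + tail w.
Proof. by rewrite /dotp big_ord_recl expr2; under eq_bigr do rewrite -expr2. Qed.

Lemma coord1_addf1 w a : coord1 (w + a *: f1 R m.+1) = coord1 w + a.
Proof. by rewrite /coord1 !mxE /= mulr1. Qed.

Lemma coord1_le_enorm w : `|coord1 w| <= enorm w.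
Proof.
by rewrite /enorm dotp_self -sqrtr_sqr ler_sqrt ?addr_ge0 ?sqr_ge0 // lerDl.
Qed.

Lemma enorm_addf1 w a : enorm (w + a *: f1 R m.+1) <= enorm w + `|a|.
Proof.
have tail_addf1 : tail (w + a *: f1 R m.+1) = tail w.
  by apply: eq_bigr => i _; rewrite !mxE /= mulr0 addr0.
have w0N := coord1_le_enorm w.
have N0 : 0 <= enorm w by apply: sqrtr_ge0.
have NN : enorm w ^+ 2 = coord1 w ^+ 2 + tail w.
  by rewrite /enorm sqr_sqrtr -?dotp_self // dotp_self addr_ge0 ?sqr_ge0.
rewrite {1}/enorm dotp_self tail_addf1 coord1_addf1.
rewrite -(ger0_norm (addr_ge0 N0 (normr_ge0 a))) -sqrtr_sqr ler_sqrt ?sqr_ge0 //.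
have wa : coord1 w * a <= `|coord1 w| * `|a| by rewrite -normrM ler_norm.
have aa : `|a| ^+ 2 = a ^+ 2 by rewrite real_normK ?num_real.
have := normr_ge0 a; nra.
Qed.

Lemma enorm_le_of_near_f1 v a e :
  enorm (v - a *: f1 R m.+1) <= e -> enorm v <= `|a| + e.
Proof.
by move=> ve; have := enorm_addf1 (v - a *: f1 R m.+1) a; rewrite subrK; lra.
Qed.

Lemma coord1_ge_of_near_f1 v a e :
  enorm (v - a *: f1 R m.+1) <= e -> a - e <= coord1 v.
Proof.
move=> ve; rewrite -[v in coord1 v](subrK (a *: f1 R m.+1)) coord1_addf1.
have := coord1_le_enorm (v - a *: f1 R m.+1).
by have := ler_norm (- coord1 (v - a *: f1 R m.+1)); rewrite normrN; lra.
Qed.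

End NearFirstAxis.

Theorem lemma4p2 (R : realType) (n m : nat) (p : R) :
  (2 <= n)%N -> (1 <= m)%N -> 0 < p < 1 ->
  exists eps1 : R, 0 < eps1 /\
  forall eps : R, 0 < eps -> eps <= eps1 ->
  forall u : 'rV[R]_n -> 'rV[R]_m,
    viscosity_solution p (@B1 R n) u ->
    (forall x, B1 x -> enorm (u x - u0 p (xn x) *: f1 R m) <= eps) ->
    (forall x, B1 x -> xn x < - eps -> enorm (u x) = 0) ->
    (forall x, B1 x ->
       enorm (u x) <= u0 p (xn x + powR eps (1 / (2 * kappa p)))) /\
    (forall x, B1 x -> powR eps (1 / (2 * kappa p)) <= xn x ->
       u0 p (xn x - powR eps (1 / (2 * kappa p))) <= coord1 (u x)).
Proof.
move=> _ m_gt0 p01; exists (eps1 p); split; first exact: eps1_gt0.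
move=> eps e0 ee u _ near_u0 u_eq0.
case: m m_gt0 u near_u0 u_eq0 => [//|m] _ u near_u0 u_eq0.
have shift := u0_add_eps_le_shift p01 e0 ee.
set d := eps `^ _ in shift *.
split=> x Bx.
  have [xe | ex] := ltP (xn x) (- eps); first by rewrite u_eq0 ?u0_ge0.
  have := enorm_le_of_near_f1 (near_u0 x Bx).
  by rewrite ger0_norm ?u0_ge0 //; have := shift _ ex; lra.
move=> dx; have := coord1_ge_of_near_f1 (near_u0 x Bx).
by have := shift (xn x - d); rewrite subrK; lra.
Qed.
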